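(* Let $n\ge 2$ and let $P(z)=\sum_{j=0}^{2n}p_jz^j$ be a polynomial with real coefficients, $p_{2n}\neq 0$, which is self-reciprocal, i.e. $p_j=p_{2n-j}$ for $j=0,\dots,2n$. Put $$C_n(x)=p_{2n}T_n(x)+p_{2n-1}T_{n-1}(x)+\cdots+p_{n+1}T_1(x)+\tfrac{p_n}{2}T_0(x),$$ so that $P(z)=2z^nC_n(x)$ with $x=\tfrac12\left(z+\tfrac1z\right)$. For each kind $\alpha\in\{T,U,V,W\}$, with $Q^{\alpha}_m$ denoting the Chebyshev polynomial of degree $m$ of that kind ($Q^T=T,\ Q^U=U,\ Q^V=V,\ Q^W=W$), define the class $\mathcal{P}_\alpha$ of such polynomials $P$ by: 1. $\mathcal{P}_T$: $p_{2n-2}=p_{2n-3}=\cdots=p_n=0$ and $p_{2n}p_{2n-1}\neq 0$; 2. $\mathcal{P}_U$: $p_j=p_{2n}$ for every even $j$ with $n\le j\le 2n$, $p_j=p_{2n-1}$ for every odd $j$ with $n\le j\le 2n$, and $p_{2n}p_{2n-1}\ne 0$; 3. $\mathcal{P}_V$: $p_{2n-k}=(-1)^{k-1}p_{2n-1}$ for $k=1,\dots,n$ (i.e. $p_{2n-1}=-p_{2n-2}=p_{2n-3}=\cdots=(-1)^np_{n+1}=(-1)^{n-1}p_n$), $p_{2n}\neq0$ and $p_{2n}\neq -p_{2n-1}$; 4. $\mathcal{P}_W$: $p_{2n-1}=p_{2n-2}=\cdots=p_n$, $p_{2n}\ne 0$ and $p_{2n}\neq p_{2n-1}$. Then for each $\alpha$,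 $P\in\mathcal{P}_\alpha$ if and only if $C_n(x)=c_0Q^\alpha_n(x)+c_1Q^\alpha_{n-1}(x)$ for some real $c_0,c_1$ with $c_0c_1\neq 0$ (i.e. $C_n$ is a Chebyshev quasi-orthogonal polynomial of order one of kind $\alpha$). Explicitly, for $P$ in the respective class: $C_n=p_{2n}T_n+p_{2n-1}T_{n-1}$; $C_n=\tfrac{p_{2n}}2U_n+\tfrac{p_{2n-1}}2U_{n-1}$; $C_n=\tfrac{p_{2n}}2V_n+\tfrac{p_{2n}+p_{2n-1}}2V_{n-1}$; $C_n=\tfrac{p_{2n}}2W_n+\tfrac{p_{2n-1}-p_{2n}}2W_{n-1}$.
   Context: Chebyshev polynomials of degree $m$ of the first, second, third and fourth kinds are defined, for $x=\cos\theta$, by $T_m(x)=\cos m\theta$, $U_m(x)=\frac{\sin(m+1)\theta}{\sin\theta}$, $V_m(x)=\frac{\cos(m+\frac12)\theta}{\cos\frac12\theta}$, $W_m(x)=\frac{\sin(m+\frac12)\theta}{\sin\frac12\theta}$. A polynomial of degree $n$ is called quasi-orthogonal of order one with respect to an orthogonal family $\{Q_m\}$ if it equals $c_0Q_n+c_1Q_{n-1}$ with $c_0c_1\neq0$. *)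

From HB Require Import structures.
From mathcomp Require Import all_boot all_order all_algebra.
From mathcomp Require Import reals.
Set Implicit Arguments. Unset Strict Implicit. Unset Printing Implicit Defensive.
Import Order.TTheory GRing.Theory Num.Theory.
Local Open Scope ring_scope.

Section Cheb.
Variable R : realType.

(* Chebyshev-type sequences: Q_0 = 1, Q_1 = a1, Q_(m+2) = 2 X Q_(m+1) - Q_m. *)
Fixpoint cheb_pair (a1 : {poly R}) (m : nat) : {poly R} * {poly R} :=
  match m with
  | 0 => (1, a1)
  | m'.+1 => let: (x, y) := cheb_pair a1 m' in (y, 'X *+ 2 * y - x)
  end.
Definition cheb_seq (a1 : {poly R}) (m : nat) : {poly R} := (cheb_pair a1 m).1.

Definition chebT (m : nat) : {poly R} := cheb_seq 'X m.
Definition chebU (m : nat) : {poly R} := cheb_seq ('X *+ 2) m.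
(* Third kind: V_0 = 1, V_1 = 2x - 1. (V_m(cos t) = cos((m+1/2)t)/cos(t/2)) *)
Definition chebV (m : nat) : {poly R} := cheb_seq ('X *+ 2 - 1) m.
(* Fourth kind: W_0 = 1, W_1 = 2x + 1. (W_m(cos t) = sin((m+1/2)t)/sin(t/2)) *)
Definition chebW (m : nat) : {poly R} := cheb_seq ('X *+ 2 + 1) m.

Definition self_reciprocal_deg (n : nat) (p : {poly R}) : Prop :=
  size p = (2 * n).+1 /\ forall j, (j <= 2 * n)%N -> p`_j = p`_(2 * n - j).

Definition Cn (n : nat) (p : {poly R}) : {poly R} :=
  \sum_(1 <= k < n.+1) p`_(n + k) *: chebT k + (p`_n / 2) *: chebT 0.

Definition classT (n : nat) (p : {poly R}) : Prop :=
  (forall j, (n <= j)%N -> (j <= 2 * n - 2)%N -> p`_j = 0) /\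
  p`_(2 * n) * p`_(2 * n - 1) != 0.

Definition classU (n : nat) (p : {poly R}) : Prop :=
  (forall j, (n <= j)%N -> (j <= 2 * n)%N ->
     (~~ odd j -> p`_j = p`_(2 * n)) /\ (odd j -> p`_j = p`_(2 * n - 1))) /\
  p`_(2 * n) * p`_(2 * n - 1) != 0.

Definition classV (n : nat) (p : {poly R}) : Prop :=
  (forall k, (1 <= k)%N -> (k <= n)%N ->
     p`_(2 * n - k) = (-1) ^+ (k - 1) * p`_(2 * n - 1)) /\
  p`_(2 * n) != 0 /\ p`_(2 * n) != - p`_(2 * n - 1).

Definition classW (n : nat) (p : {poly R}) : Prop :=
  (forall j, (n <= j)%N -> (j <= 2 * n - 1)%N -> p`_j = p`_(2 * n - 1)) /\
  p`_(2 * n) != 0 /\ p`_(2 * n) != p`_(2 * n - 1).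

Definition quasi_orth1 (Q : nat -> {poly R}) (n : nat) (f : {poly R}) : Prop :=
  exists c0 c1 : R, c0 * c1 != 0 /\ f = c0 *: Q n + c1 *: Q n.-1.

End Cheb.

From HB Require Import structures.
From mathcomp Require Import all_boot all_order all_algebra.
From mathcomp Require Import reals.
From mathcomp Require Import ring zify.
Set Implicit Arguments. Unset Strict Implicit. Unset Printing Implicit Defensive.
Import Order.TTheory GRing.Theory Num.Theory.
Local Open Scope ring_scope.

(* All four Chebyshev families obey the same three-term recurrence, so their
   differences telescope into first-kind polynomials: W_m - W_(m-1) = 2 T_m,
   V_m + V_(m-1) = 2 T_m and U_m - U_(m-2) = 2 T_m.  Hence every Q_m has explicit
   coordinates in the basis T_0/2, T_1, T_2, ..., in which C_n has coordinates
   p_n, ..., p_2n.  This basis is triangular (deg T_k = k), so C_n = c0 Q_n + c1 Q_(n-1)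
   is equivalent to an explicit formula for each p_(n+k) in terms of c0 and c1, and
   each class condition says exactly that these formulas hold with c0 c1 <> 0. *)

Lemma eq_rec2 (T : Type) (step : T -> T -> T) (f g : nat -> T) :
  (forall m, f m.+2 = step (f m.+1) (f m)) ->
  (forall m, g m.+2 = step (g m.+1) (g m)) ->
  f 0%N = g 0%N -> f 1%N = g 1%N -> f =1 g.
Proof.
move=> fS gS f0 f1 m; suff [] : f m = g m /\ f m.+1 = g m.+1 by [].
by elim: m => [|m [IHm IHmS]]; split; rewrite // fS gS IHm IHmS.
Qed.

Lemma triangular_coord_inj (R : idomainType) (q : nat -> {poly R})
    (a b : nat -> R) N :
  (forall k, size (q k) = k.+1) ->
  \sum_(0 <= k < N) a k *: q k = \sum_(0 <= k < N) b k *: q k ->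
  forall k, (k < N)%N -> a k = b k.
Proof.
move=> size_q; elim: N => [//|N IHN].
rewrite !big_nat_recr //= => eq_sum.
have high_coef c : (\sum_(0 <= k < N) c k *: q k)`_N = 0.
  rewrite coef_sum big1_seq // => k; rewrite mem_index_iota => /andP[_ ltkN].
  by rewrite coefZ nth_default ?mulr0 ?size_q.
have eq_abN : a N = b N.
  have /eqP := congr1 (fun r : {poly R} => r`_N) eq_sum.
  rewrite !coefD !coefZ !high_coef !add0r.
  have lead_qN : (q N)`_N != 0.
    rewrite -[N]/(N.+1.-1) -{2}(size_q N) -lead_coefE.
    by rewrite lead_coef_eq0 -size_poly_gt0 size_q.
  by rewrite (inj_eq (mulIf lead_qN)) => /eqP.
move: eq_sum; rewrite eq_abN => /addIr /IHN eq_ab k.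
by rewrite ltnS leq_eqVlt => /predU1P[->|/eq_ab].
Qed.

Section Chebyshev.
Variable R : realType.

Lemma cheb_seqSS (a : {poly R}) m :
  cheb_seq a m.+2 = 'X *+ 2 * cheb_seq a m.+1 - cheb_seq a m.
Proof. by rewrite /cheb_seq /=; case: (cheb_pair a m). Qed.

Lemma size_chebT m : size (chebT R m) = m.+1.
Proof.
have size_X2 (r : {poly R}) : r != 0 -> size ('X *+ 2 * r) = (size r).+1.
  by move=> r_neq0; rewrite mulrnAl -scaler_nat size_scale ?pnatr_eq0 // mulrC size_mulX.
suff [] : size (chebT R m) = m.+1 /\ size (chebT R m.+1) = m.+2 by [].
elim: m => [|m [IHm IHmS]].
  by rewrite /chebT /= size_polyX size_poly1.
split=> //; rewrite /chebT cheb_seqSS -/(chebT R m.+1) -/(chebT R m).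
have chebT_neq0 : chebT R m.+1 != 0 by rewrite -size_poly_gt0 IHmS.
by rewrite size_polyDl size_X2 // ?size_polyN ?IHm IHmS.
Qed.

Lemma chebWS m : chebW R m.+1 = chebW R m + chebT R m.+1 *+ 2.
Proof.
apply: (@eq_rec2 _ (fun y x => 'X *+ 2 * y - x) (fun m => chebW R m.+1)
  (fun m => chebW R m + chebT R m.+1 *+ 2)) => [k|k||];
  rewrite /chebW /chebT ?cheb_seqSS /cheb_seq /=; ring.
Qed.

Lemma chebVS m : chebV R m.+1 = chebT R m.+1 *+ 2 - chebV R m.
Proof.
apply: (@eq_rec2 _ (fun y x => 'X *+ 2 * y - x) (fun m => chebV R m.+1)
  (fun m => chebT R m.+1 *+ 2 - chebV R m)) => [k|k||];
  rewrite /chebV /chebT ?cheb_seqSS /cheb_seq /=; ring.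
Qed.

Lemma chebUSS m : chebU R m.+2 = chebU R m + chebT R m.+2 *+ 2.
Proof.
apply: (@eq_rec2 _ (fun y x => 'X *+ 2 * y - x) (fun m => chebU R m.+2)
  (fun m => chebU R m + chebT R m.+2 *+ 2)) => [k|k||];
  rewrite /chebU /chebT ?cheb_seqSS /cheb_seq /=; ring.
Qed.

Definition chebTh (k : nat) : {poly R} :=
  (if k == 0%N then 2^-1 else 1) *: chebT R k.

Lemma size_chebTh k : size (chebTh k) = k.+1.
Proof.
rewrite size_scale ?size_chebT //.
by case: (k == 0%N); rewrite ?invr_eq0 ?pnatr_eq0 ?oner_eq0.
Qed.

Lemma chebTh0_scale2 : 2 *: chebTh 0 = 1.
Proof. by rewrite /chebTh /= scalerA divff ?pnatr_eq0 // scale1r. Qed.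

Lemma chebThS m : chebTh m.+1 = chebT R m.+1.
Proof. exact: scale1r. Qed.

Lemma Cn_chebTh n (p : {poly R}) :
  Cn n p = \sum_(0 <= k < n.+1) p`_(n + k) *: chebTh k.
Proof.
rewrite /Cn [RHS]big_ltn // [RHS]addrC addn0 /chebTh /= scalerA; congr (_ + _).
by apply: eq_big_nat => k /andP[k_gt0 _]; rewrite gtn_eqF // scale1r.
Qed.

Lemma chebW_chebTh m : chebW R m = \sum_(0 <= k < m.+1) 2 *: chebTh k.
Proof.
elim: m => [|m IHm]; first by rewrite big_nat1 chebTh0_scale2.
by rewrite big_nat_recr //= chebWS IHm chebThS scaler_nat.
Qed.

Lemma chebV_chebTh m :
  chebV R m = \sum_(0 <= k < m.+1) (2 * (-1) ^+ (m - k)) *: chebTh k.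
Proof.
elim: m => [|m IHm]; first by rewrite big_nat1 mulr1 chebTh0_scale2.
rewrite big_nat_recr //= chebVS IHm chebThS subnn mulr1 scaler_nat addrC -sumrN.
congr (_ + _); apply: eq_big_nat => k /andP[_ ltkm].
by rewrite subSn // exprS mulrCA mulN1r scaleNr.
Qed.

Lemma chebU_chebTh m :
  chebU R m = \sum_(0 <= k < m.+1) (if odd (m - k) then 0 else 2) *: chebTh k.
Proof.
pose rhs m := \sum_(0 <= k < m.+1) (if odd (m - k) then 0 else 2) *: chebTh k.
suff [] : chebU R m = rhs m /\ chebU R m.+1 = rhs m.+1 by [].
elim: m => [|m [IHm IHmS]].
  rewrite /rhs big_nat1 big_nat_recr //= big_nat1 /= chebTh0_scale2 scale0r add0r.
  by rewrite chebThS scaler_nat /chebU /chebT.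
split=> //; rewrite chebUSS IHm /rhs [in RHS]big_nat_recr //= [in RHS]big_nat_recr //=.
rewrite subnn subSn // subnn scale0r addr0 chebThS scaler_nat; congr (_ + _).
by apply: eq_big_nat => k /andP[_ ltkm]; rewrite !subSn ?(ltnW ltkm) //= negbK.
Qed.

Definition top_coefs (n : nat) (p : {poly R}) (g : nat -> R) : Prop :=
  forall k, (k <= n)%N -> p`_(n + k) = g k.

Lemma top_coefsE n p g j :
  top_coefs n p g -> (n <= j <= 2 * n)%N -> p`_j = g (j - n)%N.
Proof. by move=> coefs /andP[le_nj le_j2n]; rewrite -coefs ?subnKC //; lia. Qed.

Lemma top_coefs_lead n p g : top_coefs n p g -> p`_(2 * n) = g n.
Proof. by move=> coefs; rewrite (top_coefsE coefs); [congr g; lia | lia]. Qed.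

Lemma top_coefs_sublead n p g :
  (0 < n)%N -> top_coefs n p g -> p`_(2 * n - 1) = g n.-1.
Proof. by move=> n_gt0 coefs; rewrite (top_coefsE coefs); [congr g; lia | lia]. Qed.

Lemma Cn_eq_coords n p (f : {poly R}) (g : nat -> R) :
  f = \sum_(0 <= k < n.+1) g k *: chebTh k -> Cn n p = f <-> top_coefs n p g.
Proof.
rewrite Cn_chebTh => ->; split=> [eq_sum k le_kn | coefs].
  exact: (triangular_coord_inj size_chebTh eq_sum).
by apply: eq_big_nat => k /andP[_ le_kn]; rewrite coefs.
Qed.

Lemma Cn_quasi_orth1 (Q : nat -> {poly R}) (G : R -> R -> nat -> R) (P : Prop)
    n p c0' c1' :
  (forall c0 c1, c0 *: Q n + c1 *: Q n.-1 = \sum_(0 <= k < n.+1) G c0 c1 k *: chebTh k) ->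
  (P -> c0' * c1' != 0 /\ top_coefs n p (G c0' c1')) ->
  (forall c0 c1, c0 * c1 != 0 -> top_coefs n p (G c0 c1) -> P) ->
  (P <-> quasi_orth1 Q n (Cn n p)) /\ (P -> Cn n p = c0' *: Q n + c1' *: Q n.-1).
Proof.
move=> comb P_coefs coefs_P.
have Cn_eq c0 c1 := Cn_eq_coords p (comb c0 c1).
split=> [|/P_coefs[_ /Cn_eq //]]; split.
  by move=> /P_coefs[nz /Cn_eq eq_Cn]; exists c0', c1'.
by move=> [c0 [c1 [nz /Cn_eq]]]; apply: coefs_P.
Qed.

Definition coordT (n : nat) (c0 c1 : R) (k : nat) : R :=
  if k == n then c0 else if k == n.-1 then c1 else 0.

Lemma chebT_comb n c0 c1 : (1 < n)%N ->
  c0 *: chebT R n + c1 *: chebT R n.-1 =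
    \sum_(0 <= k < n.+1) coordT n c0 c1 k *: chebTh k.
Proof.
case: n => [|[|m]] // _; rewrite big_nat_recr //= big_nat_recr //= big1_seq => [|k].
  by rewrite /coordT eqxx ltn_eqF // eqxx add0r addrC !chebThS.
by rewrite mem_index_iota /coordT => /andP[_ ltkm]; rewrite !ltn_eqF ?scale0r //; lia.
Qed.

Lemma classT_coefs n p : (0 < n)%N -> classT n p ->
  p`_(2 * n) * p`_(2 * n - 1) != 0 /\
  top_coefs n p (coordT n p`_(2 * n) p`_(2 * n - 1)).
Proof.
move=> n_gt0 [zero nz]; split=> // k le_kn; rewrite /coordT.
case: eqP => [->|ne_kn]; first by congr p`_ _; lia.
case: eqP => [->|ne_kn1]; first by congr p`_ _; lia.
by apply: zero; lia.
Qed.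

Lemma coefs_classT n p c0 c1 : (0 < n)%N -> c0 * c1 != 0 ->
  top_coefs n p (coordT n c0 c1) -> classT n p.
Proof.
move=> n_gt0 nz coefs; split=> [j le_nj le_j2n|].
  by rewrite (top_coefsE coefs) /coordT ?ifF //; lia.
rewrite (top_coefs_lead coefs) (top_coefs_sublead n_gt0 coefs) /coordT eqxx.
by rewrite ifF ?eqxx //; lia.
Qed.

Definition coordU (n : nat) (c0 c1 : R) (k : nat) : R :=
  2 * (if odd (n + k) then c1 else c0).

Lemma chebU_comb n c0 c1 : (0 < n)%N ->
  c0 *: chebU R n + c1 *: chebU R n.-1 =
    \sum_(0 <= k < n.+1) coordU n c0 c1 k *: chebTh k.
Proof.
case: n => // m _ /=; rewrite !chebU_chebTh big_nat_recr //= [in RHS]big_nat_recr //=.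
rewrite subnn /coordU addnn odd_double scalerDr !scaler_sumr addrAC -big_split /=.
congr (_ + _); last by rewrite scalerA mulrC.
apply: eq_big_nat => k /andP[_ ltkm]; rewrite !scalerA -scalerDl; congr (_ *: _).
rewrite subSn //= oddB ?oddD //.
by case: (odd m); case: (odd k) => /=; ring.
Qed.

Definition coordV (n : nat) (c0 c1 : R) (k : nat) : R :=
  2 * (if k == n then c0 else (-1) ^+ (n.-1 - k) * (c1 - c0)).

Lemma chebV_comb n c0 c1 : (0 < n)%N ->
  c0 *: chebV R n + c1 *: chebV R n.-1 =
    \sum_(0 <= k < n.+1) coordV n c0 c1 k *: chebTh k.
Proof.
case: n => // m _ /=; rewrite chebVS chebV_chebTh [in RHS]big_nat_recr //=.
rewrite /coordV eqxx chebThS; set S := \sum_(0 <= k < m.+1) _.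
have -> : c0 *: (chebT R m.+1 *+ 2 - S) + c1 *: S = (c1 - c0) *: S + (2 * c0) *: chebT R m.+1.
  by rewrite scalerDr scalerBl -scaler_nat scalerA mulrC scalerN [RHS]addrC addrA addrAC.
rewrite scaler_sumr; congr (_ + _).
by apply: eq_big_nat => k /andP[_ ltkm]; rewrite ltn_eqF // scalerA; congr (_ *: _); ring.
Qed.

Definition coordW (n : nat) (c0 c1 : R) (k : nat) : R :=
  2 * (if k == n then c0 else c0 + c1).

Lemma chebW_comb n c0 c1 : (0 < n)%N ->
  c0 *: chebW R n + c1 *: chebW R n.-1 =
    \sum_(0 <= k < n.+1) coordW n c0 c1 k *: chebTh k.
Proof.
case: n => // m _ /=; rewrite chebWS chebW_chebTh [in RHS]big_nat_recr //=.
rewrite /coordW eqxx chebThS.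
rewrite scalerDr addrAC -scalerDl scaler_sumr -scaler_nat scalerA [2 * c0]mulrC.
congr (_ + _); apply: eq_big_nat => k /andP[_ ltkm].
by rewrite ltn_eqF // scalerA mulrC.
Qed.

Lemma classU_coefs n p : classU n p ->
  (p`_(2 * n) / 2) * (p`_(2 * n - 1) / 2) != 0 /\
  top_coefs n p (coordU n (p`_(2 * n) / 2) (p`_(2 * n - 1) / 2)).
Proof.
move=> [parity nz]; split.
  by rewrite mulrACA mulf_neq0 // mulf_neq0 // invr_eq0 pnatr_eq0.
move=> k le_kn; have [|even_eq odd_eq] := parity (n + k) (leq_addr k n); first lia.
by rewrite /coordU; case: ifP => [/odd_eq | /negbT/even_eq] ->; field.
Qed.

Lemma coefs_classU n p c0 c1 : (0 < n)%N -> c0 * c1 != 0 ->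
  top_coefs n p (coordU n c0 c1) -> classU n p.
Proof.
move=> n_gt0 nz coefs.
have coefU j : (n <= j <= 2 * n)%N -> p`_j = 2 * (if odd j then c1 else c0).
  by move=> range; rewrite (top_coefsE coefs range) /coordU subnKC //; case/andP: range.
have lead : p`_(2 * n) = 2 * c0 by rewrite coefU ?oddM //; lia.
have sublead : p`_(2 * n - 1) = 2 * c1 by rewrite coefU ?oddB ?oddM //=; lia.
split=> [j le_nj le_j2n|].
  by rewrite coefU ?le_nj // lead sublead; case: ifP.
by rewrite lead sublead mulrACA mulf_neq0 // -natrM pnatr_eq0.
Qed.

Lemma classV_coefs n p : classV n p ->
  (p`_(2 * n) / 2) * ((p`_(2 * n) + p`_(2 * n - 1)) / 2) != 0 /\
  top_coefs n p (coordV n (p`_(2 * n) / 2) ((p`_(2 * n) + p`_(2 * n - 1)) / 2)).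
Proof.
move=> [alternating [lead_neq0 sum_neq0]]; split.
  by rewrite mulrACA !mulf_neq0 ?invr_eq0 ?pnatr_eq0 ?addr_eq0.
move=> k le_kn; rewrite /coordV; case: eqP => [->|ne_kn].
  by rewrite addnn -mul2n; field.
rewrite (_ : n + k = 2 * n - (n - k))%N; last by lia.
rewrite alternating; [|lia..].
by rewrite (_ : n - k - 1 = n.-1 - k)%N; [field | lia].
Qed.

Lemma coefs_classV n p c0 c1 : (0 < n)%N -> c0 * c1 != 0 ->
  top_coefs n p (coordV n c0 c1) -> classV n p.
Proof.
move=> n_gt0; rewrite mulf_eq0 negb_or => /andP[c0_neq0 c1_neq0] coefs.
have lead : p`_(2 * n) = 2 * c0 by rewrite (top_coefs_lead coefs) /coordV eqxx.
have sublead : p`_(2 * n - 1) = 2 * (c1 - c0).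
  by rewrite (top_coefs_sublead n_gt0 coefs) /coordV ifF ?subnn ?mul1r //; lia.
split; [move=> k ge1_k le_kn | split].
- rewrite (top_coefsE coefs) /coordV ?ifF; [|lia..].
  by rewrite sublead (_ : n.-1 - (2 * n - k - n) = k - 1)%N; [ring | lia].
- by rewrite lead mulf_neq0 ?pnatr_eq0.
- rewrite lead sublead -addr_eq0 (_ : 2 * c0 + 2 * (c1 - c0) = 2 * c1); last by ring.
  by rewrite mulf_neq0 ?pnatr_eq0.
Qed.

Lemma classW_coefs n p : classW n p ->
  (p`_(2 * n) / 2) * ((p`_(2 * n - 1) - p`_(2 * n)) / 2) != 0 /\
  top_coefs n p (coordW n (p`_(2 * n) / 2) ((p`_(2 * n - 1) - p`_(2 * n)) / 2)).
Proof.
move=> [constant [lead_neq0 diff_neq0]]; split.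
  by rewrite mulrACA !mulf_neq0 ?invr_eq0 ?pnatr_eq0 // subr_eq0 eq_sym.
move=> k le_kn; rewrite /coordW; case: eqP => [->|ne_kn].
  by rewrite addnn -mul2n; field.
by rewrite constant; [field | lia | lia].
Qed.

Lemma coefs_classW n p c0 c1 : (0 < n)%N -> c0 * c1 != 0 ->
  top_coefs n p (coordW n c0 c1) -> classW n p.
Proof.
move=> n_gt0; rewrite mulf_eq0 negb_or => /andP[c0_neq0 c1_neq0] coefs.
have lead : p`_(2 * n) = 2 * c0 by rewrite (top_coefs_lead coefs) /coordW eqxx.
have sublead : p`_(2 * n - 1) = 2 * (c0 + c1).
  by rewrite (top_coefs_sublead n_gt0 coefs) /coordW ifF //; lia.
split; [move=> j le_nj le_j2n1 | split].
- by rewrite sublead (top_coefsE coefs) /coordW ?ifF //; lia.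
- by rewrite lead mulf_neq0 ?pnatr_eq0.
- rewrite lead sublead -subr_eq0 (_ : 2 * c0 - 2 * (c0 + c1) = - (2 * c1)); last by ring.
  by rewrite oppr_eq0 mulf_neq0 ?pnatr_eq0.
Qed.

End Chebyshev.

Theorem mainTheorem1 (R : realType) (n : nat) (p : {poly R}) :
  (2 <= n)%N -> self_reciprocal_deg n p ->
  (classT n p <-> quasi_orth1 (@chebT R) n (Cn n p)) /\
  (classU n p <-> quasi_orth1 (@chebU R) n (Cn n p)) /\
  (classV n p <-> quasi_orth1 (@chebV R) n (Cn n p)) /\
  (classW n p <-> quasi_orth1 (@chebW R) n (Cn n p)) /\
  (classT n p -> Cn n p = p`_(2 * n) *: @chebT R n + p`_(2 * n - 1) *: @chebT R n.-1) /\
  (classU n p -> Cn n p = (p`_(2 * n) / 2) *: @chebU R n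
                          + (p`_(2 * n - 1) / 2) *: @chebU R n.-1) /\
  (classV n p -> Cn n p = (p`_(2 * n) / 2) *: @chebV R n
                          + ((p`_(2 * n) + p`_(2 * n - 1)) / 2) *: @chebV R n.-1) /\
  (classW n p -> Cn n p = (p`_(2 * n) / 2) *: @chebW R n
                          + ((p`_(2 * n - 1) - p`_(2 * n)) / 2) *: @chebW R n.-1).
Proof.
(* Self-reciprocity only links P to C_n, and Cn already encodes that link. *)
move=> n_ge2 _; have n_gt0 : (0 < n)%N by exact: ltnW.
have [T_iff T_eq] := Cn_quasi_orth1 (P := classT n p)
  (fun c0 c1 => chebT_comb c0 c1 n_ge2) (classT_coefs n_gt0)
  (fun _ _ => coefs_classT n_gt0).
have [U_iff U_eq] := Cn_quasi_orth1 (P := classU n p)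
  (fun c0 c1 => chebU_comb c0 c1 n_gt0) (@classU_coefs R n p)
  (fun _ _ => coefs_classU n_gt0).
have [V_iff V_eq] := Cn_quasi_orth1 (P := classV n p)
  (fun c0 c1 => chebV_comb c0 c1 n_gt0) (@classV_coefs R n p)
  (fun _ _ => coefs_classV n_gt0).
have [W_iff W_eq] := Cn_quasi_orth1 (P := classW n p)
  (fun c0 c1 => chebW_comb c0 c1 n_gt0) (@classW_coefs R n p)
  (fun _ _ => coefs_classW n_gt0).
exact: conj T_iff (conj U_iff (conj V_iff (conj W_iff
  (conj T_eq (conj U_eq (conj V_eq W_eq)))))).
Qed.
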